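(* Let $0=t_0<t_1<\dots<t_n=1$ be a grid. Consider the following random procedure (the remasked AUDM sampler with the exact noise-conditioned denoiser). 1. Draw $U_{t_n}$ uniformly from $\mathsf X$, then draw $X_{t_n}\sim p_{t_n}(\cdot\mid U_{t_n})$. 2. For $i=n-1,n-2,\dots,0$: - draw $X_0'\sim p_{0|t_{i+1}}(\cdot\mid X_{t_{i+1}},U_{t_{i+1}})$; - draw $X_{t_i}\sim q_{t_i|0,t_{i+1}}(\cdot\mid X_0',X_{t_{i+1}})$ (for $t_i=0$ this means $X_{t_0}=X_0'$); - independently over $\ell$, draw $U^\ell_{t_i}$ as follows: if $X^\ell_{t_i}\ne X_0'^{\,\ell}$, set $U^\ell_{t_i}=X^\ell_{t_i}$; otherwise draw $U^\ell_{t_i}\sim\mathrm{Cat}\big(\frac{X_0'^{\,\ell}+\alpha_{t_i}(\mathbf 1-X_0'^{\,\ell})}{1+(K-1)\alpha_{t_i}}\big)$. Then the law of $(X_{t_0},\dots,X_{t_n})$ is the UDM reverse-chain law $$p_{t_n}(\mathbf x_{t_n})\prod_{i=1}^n p_{t_{i-1}|t_i}(\mathbf x_{t_{i-1}}\mid\mathbf x_{t_i}).$$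
   Context: **UDM setup.** - Let $K\ge2$, $L\ge1$ and $\mathsf V=\{1,\dots,K\}$. Tokens are identified with the standard basis vectors of $\mathbb R^K$, and $\mathbf 1$ is the all-ones vector. - $\mathsf X=\mathsf V^L$, with $\mathbf x^\ell$ the $\ell$-th token. $p_0$ is a distribution on $\mathsf X$. - The schedule $\alpha:[0,1]\to[0,1]$ is strictly decreasing, with $\alpha_0=1$ and $\alpha_t\in(0,1)$ for $t\in(0,1]$. Set $\alpha_{t|s}=\alpha_t/\alpha_s$. - The UDM forward kernel is $q_{t|s}(\mathbf x_t\mid\mathbf x_s)=\prod_\ell\langle\mathbf x_t^\ell,\alpha_{t|s}\mathbf x_s^\ell+(1-\alpha_{t|s})\mathbf 1/K\rangle$. - $p_t(\mathbf x)=\sum_{\mathbf x_0}p_0(\mathbf x_0)q_{t|0}(\mathbf x\mid\mathbf x_0)$. - UDM reverse kernel: $p_{s|t}(\mathbf x_s\mid\mathbf x_t)=p_s(\mathbf x_s)q_{t|s}(\mathbf x_t\mid\mathbf x_s)/p_t(\mathbf x_t)$. - UDM bridge: $q_{s|0,t}(\mathbf x_s\mid\mathbf x_0,\mathbf x_t)=q_{t|s}(\mathbf x_t\mid\mathbf x_s)q_{s|0}(\mathbf x_s\mid\mathbf x_0)/q_{t|0}(\mathbf x_t\mid\mathbf x_0)$ for $s>0$, and $q_{0|0,t}(\mathbf x\mid\mathbf x_0,\mathbf x_t)=\mathbf 1\{\mathbf x=\mathbf x_0\}$. **Absorbing lifting.** - For $\mathbf u\in\mathsf X$, define $q_{t|0}(\mathbf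 x_t\mid\mathbf x_0,\mathbf u)=\prod_\ell\langle\mathbf x_t^\ell,\alpha_t\mathbf x_0^\ell+(1-\alpha_t)\mathbf u^\ell\rangle$. - $p_t(\mathbf x\mid\mathbf u)=\sum_{\mathbf x_0}p_0(\mathbf x_0)q_{t|0}(\mathbf x\mid\mathbf x_0,\mathbf u)$. - Noise-conditioned denoiser: $p_{0|t}(\mathbf x_0\mid\mathbf x_t,\mathbf u)=p_0(\mathbf x_0)q_{t|0}(\mathbf x_t\mid\mathbf x_0,\mathbf u)/p_t(\mathbf x_t\mid\mathbf u)$, defined when $p_t(\mathbf x_t\mid\mathbf u)>0$. *)

From HB Require Import structures.
From mathcomp Require Import all_boot all_order all_algebra.
Set Implicit Arguments. Unset Strict Implicit. Unset Printing Implicit Defensive.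
Import Order.TTheory GRing.Theory Num.Theory.
Local Open Scope ring_scope.

(* Sequences X = V^L with V = {1..K} represented as 'I_K (token k <-> basis vector e_k). *)
Definition seqs (K L : nat) := {ffun 'I_L -> 'I_K}.

Section UDM.
Variables (R : realFieldType) (K L : nat) (alpha : R -> R) (p0 : seqs K L -> R).

Local Notation X := (seqs K L).

(* UDM forward kernel q_{t|s}(xt | xs), with alpha_{t|s} = alpha t / alpha s:
   <e_a, c e_b + (1-c) 1/K> = c [a = b] + (1-c)/K *)
Definition qfwd (s t : R) (xt xs : X) : R :=
  \prod_(l < L) (alpha t / alpha s * (xt l == xs l)%:R + (1 - alpha t / alpha s) / K%:R).

Definition pmarg (t : R) (x : X) : R := \sum_(x0 : X) p0 x0 * qfwd 0 t x x0.

Definition prev (s t : R) (xs xt : X) : R := pmarg s xs * qfwd s t xt xs / pmarg t xt.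

Definition bridge (s t : R) (xs x0 xt : X) : R :=
  if s == 0 then (xs == x0)%:R
  else qfwd s t xt xs * qfwd 0 s xs x0 / qfwd 0 t xt x0.

Definition qlift (t : R) (x x0 u : X) : R :=
  \prod_(l < L) (alpha t * (x l == x0 l)%:R + (1 - alpha t) * (x l == u l)%:R).

Definition pcond (t : R) (x u : X) : R := \sum_(x0 : X) p0 x0 * qlift t x x0 u.

(* noise-conditioned denoiser p_{0|t}(x0 | x, u)  (x/0 = 0 convention of MathComp) *)
Definition denoiser (t : R) (x0 x u : X) : R := p0 x0 * qlift t x x0 u / pcond t x u.

Definition remask (a : R) (u x x0 : X) : R :=
  \prod_(l < L)
     (if x l != x0 l then (u l == x l)%:R
      else (if u l == x0 l then 1 else a) / (1 + (K%:R - 1) * a)).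

(* Law of (X_{t_0},...,X_{t_n}) produced by the remasked AUDM sampler, obtained by
   marginalising the joint law of all draws (U_{t_n}, X_{t_n}, and for each i:
   X_0'^{(i)}, X_{t_i}, U_{t_i}) over the U's and X_0''s. *)
Definition sampler_law (n : nat) (t : nat -> R) (x : {ffun 'I_n.+1 -> X}) : R :=
  \sum_(u : {ffun 'I_n.+1 -> X}) \sum_(y : {ffun 'I_n -> X})
    ((#|{: X}|%:R)^-1 * pcond (t n) (x ord_max) (u ord_max) *
     \prod_(i < n)
       (denoiser (t i.+1) (y i) (x (inord i.+1)) (u (inord i.+1)) *
        bridge (t i) (t i.+1) (x (inord i)) (y i) (x (inord i.+1)) *
        remask (alpha (t i)) (u (inord i)) (x (inord i)) (y i))).

Definition reverse_law (n : nat) (t : nat -> R) (x : {ffun 'I_n.+1 -> X}) : R :=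
  pmarg (t n) (x ord_max) *
  \prod_(i < n) prev (t i) (t i.+1) (x (inord i)) (x (inord i.+1)).

End UDM.

From Pilot Require Import Defs.
From HB Require Import structures.
From mathcomp Require Import all_boot all_order all_algebra.
From mathcomp Require Import ring.
Import Order.TTheory GRing.Theory Num.Theory.
Local Open Scope ring_scope.

(* The sampler is marginalised from the top of the grid downwards.  At step i the
   noise U_{t_(i+1)} and the clean draw X_0' are summed out: p_t(x | u) times the
   denoiser is p0(x0) q(x | x0, u), whose sum over u is |X| q_{t|0}(x | x0) and
   cancels the denominator of the bridge; and q_{s|0}(x_s | x0) times the remask
   law is |X|^-1 q(x_s | x0, u), the remask law being the posterior of the
   absorbing noise under a uniform prior.  So the remaining weight is again
   |X|^-1 p_{t_i}(x_{t_i} | u), times the forward kernel q_{t_(i+1)|t_i}, and the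
   reverse chain telescopes to the same product of forward kernels. *)

Section LastCoordinate.
Set Implicit Arguments. Unset Strict Implicit. Unset Printing Implicit Defensive.
Variables (R : comPzRingType) (T : finType).

Definition extend_last m (u : {ffun 'I_m -> T}) (a : T) : {ffun 'I_m.+1 -> T} :=
  [ffun i => if unlift ord_max i is Some j then u j else a].

Lemma extend_last_max m (u : {ffun 'I_m -> T}) a : extend_last u a ord_max = a.
Proof. by rewrite ffunE unlift_none. Qed.

Lemma extend_last_lift m (u : {ffun 'I_m -> T}) a j :
  extend_last u a (lift ord_max j) = u j.
Proof. by rewrite ffunE liftK. Qed.

Lemma extend_last_widen m (u : {ffun 'I_m -> T}) a (i : 'I_m) (h : (m <= m.+1)%N) :
  extend_last u a (widen_ord h i) = u i.
Proof.
have -> : widen_ord h i = lift ord_max i by apply: ord_inj; rewrite lift_max.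
exact: extend_last_lift.
Qed.

Lemma extend_last_inord m (u : {ffun 'I_m.+1 -> T}) a (i : nat) :
  (i <= m)%N -> extend_last u a (inord i) = u (inord i).
Proof.
move=> him; rewrite ffunE.
have iS : (i < m.+2)%N by rewrite ltnS (leq_trans him).
case: unliftP => [j|] /(congr1 (@nat_of_ord _)); rewrite ?lift_max inordK //.
  by move=> hi; congr (u _); apply: ord_inj; rewrite hi inordK.
by move=> hi; rewrite hi ltnn in him.
Qed.

Lemma sum_ffunS m (f : {ffun 'I_m.+1 -> T} -> R) :
  \sum_u f u = \sum_(u : {ffun 'I_m -> T}) \sum_(a : T) f (extend_last u a).
Proof.
rewrite pair_bigA /= (reindex (fun p => extend_last p.1 p.2)) //.
exists (fun u : {ffun 'I_m.+1 -> T} => ([ffun j => u (lift ord_max j)], u ord_max)).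
  move=> [u a] _ /=; rewrite extend_last_max; congr pair.
  by apply/ffunP => j; rewrite ffunE extend_last_lift.
move=> u _ /=; apply/ffunP => i; rewrite ffunE.
by case: unliftP => [j ->|->] //; rewrite ffunE.
Qed.

Lemma sum_ffun0 (c : R) : \sum_(y : {ffun 'I_0 -> T}) c = c.
Proof. by rewrite big_const card_ffun card_ord expn0 /= addr0. Qed.

End LastCoordinate.

Section ChainSum.
Set Implicit Arguments. Unset Strict Implicit. Unset Printing Implicit Defensive.
Variables (R : comPzRingType) (T S : finType) (H : nat -> T -> S -> T -> R).

Definition chain_sum n (F : T -> R) :=
  \sum_(u : {ffun 'I_n.+1 -> T}) \sum_(y : {ffun 'I_n -> S})
    (F (u ord_max) * \prod_(i < n) H i (u (inord i.+1)) (y i) (u (inord i))).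

Lemma chain_sum0 F : chain_sum 0 F = \sum_b F b.
Proof.
rewrite /chain_sum sum_ffunS (eq_bigr (fun _ => \sum_a F a)) ?sum_ffun0 // => u _.
apply: eq_bigr => a _.
by rewrite (eq_bigr (fun _ => F a)) ?sum_ffun0 // => y _; rewrite big_ord0 mulr1 extend_last_max.
Qed.

Lemma chain_sumS n F G w :
  (forall b, \sum_a \sum_z F a * H n a z b = w * G b) ->
  chain_sum n.+1 F = w * chain_sum n G.
Proof.
move=> FG; rewrite /chain_sum sum_ffunS mulr_sumr; apply: eq_bigr => u _.
under eq_bigr => a _ do rewrite sum_ffunS.
rewrite exchange_big mulr_sumr; apply: eq_bigr => y _.
have -> : u ord_max = u (inord n) by rewrite (inord_val ord_max).
rewrite mulrA -FG mulr_suml; apply: eq_bigr => a _.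
rewrite mulr_suml; apply: eq_bigr => z _.
rewrite big_ord_recr /= (inord_val ord_max) !extend_last_max extend_last_inord //.
under eq_bigr => i _ do rewrite extend_last_widen !extend_last_inord ?(ltnW (ltn_ord i)) //.
ring.
Qed.

Lemma chain_sum_elim n (f : nat -> T -> R) (w : nat -> R) :
  (forall k b, (k < n)%N -> \sum_a \sum_z f k.+1 a * H k a z b = w k * f k b) ->
  chain_sum n (f n) = \prod_(i < n) w i * \sum_b f 0%N b.
Proof.
elim: n => [|n IH] fw; first by rewrite chain_sum0 big_ord0 mul1r.
rewrite (chain_sumS (w := w n) (G := f n)) => [|b]; last exact: fw.
by rewrite IH => [|k b hk]; [rewrite big_ord_recr /= mulrCA mulrA | apply: fw; rewrite ltnS ltnW].
Qed.

End ChainSum.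

Lemma sum_delta_natr (R : pzSemiRingType) (T : finType) (a : T) :
  \sum_k ((a == k)%:R : R) = 1.
Proof. by rewrite (bigD1 a) //= eqxx big1 ?addr0 // => k /negbTE; rewrite eq_sym => ->. Qed.

Lemma prod_telescope (R : comPzRingType) n (p r q : nat -> R) :
  (forall i, (i < n)%N -> p i.+1 * r i = p i * q i) ->
  p n * \prod_(i < n) r i = p 0%N * \prod_(i < n) q i.
Proof.
elim: n => [|n IH] pq; first by rewrite !big_ord0.
rewrite !big_ord_recr /= mulrA mulrAC pq // -mulrA mulrCA IH => [|i hi]; first by ring.
by apply: pq; rewrite ltnS ltnW.
Qed.

Lemma grid_lt (R : numDomainType) n (t : nat -> R) :
  (forall i, (i < n)%N -> t i < t i.+1) ->
  {in [pred i | (i <= n)%N] &, {homo t : i j / (i < j)%N >-> i < j}}.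
Proof.
move=> t_incr; apply: homo_ltn_in => [y x z|i j _ hj k|i _]; first exact: lt_trans.
  by rewrite !inE in hj *; case/andP=> _ /ltnW /leq_trans; apply.
by rewrite !inE; apply: t_incr.
Qed.

Lemma grid_alpha_in (R : numDomainType) (alpha : R -> R) n (t : nat -> R) :
  (forall s, 0 < s -> s <= 1 -> 0 < alpha s /\ alpha s < 1) ->
  t 0%N = 0 -> t n = 1 -> (forall i, (i < n)%N -> t i < t i.+1) ->
  forall i, (i < n)%N -> 0 < alpha (t i.+1) < 1.
Proof.
move=> alpha_in t0 tn /grid_lt t_lt i hi.
have t_pos : 0 < t i.+1 by rewrite -t0 t_lt ?inE.
have t_le1 : t i.+1 <= 1.
  move: hi; rewrite leq_eqVlt => /orP[/eqP->|hin]; first by rewrite tn.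
  by rewrite -tn ltW // t_lt ?inE ?(ltnW hin).
by have [-> ->] := alpha_in _ t_pos t_le1.
Qed.

Section UDM.
Set Implicit Arguments. Unset Strict Implicit. Unset Printing Implicit Defensive.
Variables (R : realFieldType) (K L : nat) (alpha : R -> R) (p0 : seqs K L -> R).
Hypotheses (hK : (2 <= K)%N) (alpha0 : alpha 0 = 1) (p0_ge0 : forall x, 0 <= p0 x).
Local Notation X := (seqs K L).
Local Notation N := (#|{: X}|%:R : R).

Lemma natr_K_neq0 : (K%:R : R) != 0.
Proof. by rewrite pnatr_eq0 -lt0n (leq_trans _ hK). Qed.

Lemma card_seqsR : N = \prod_(l < L) (K%:R : R).
Proof. by rewrite card_ffun !card_ord natrX prodr_const card_ord. Qed.

Lemma card_seqsR_neq0 : N != 0.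
Proof. by rewrite card_seqsR; apply/prodf_neq0 => l _; apply: natr_K_neq0. Qed.

Lemma qfwd0_gt0 (t : R) (x y : X) : 0 <= alpha t < 1 -> 0 < qfwd alpha 0 t x y.
Proof.
case/andP=> a_ge0 a_lt1; apply: prodr_gt0 => l _; rewrite alpha0 divr1.
apply: ltr_wpDl; first by rewrite mulr_ge0 ?ler0n.
by rewrite divr_gt0 ?subr_gt0 // ltr0n (leq_trans _ hK).
Qed.

Lemma qfwd00 (x y : X) : qfwd alpha 0 0 x y = (x == y)%:R.
Proof.
rewrite /qfwd alpha0 divr1 subrr mul0r.
under eq_bigr do rewrite mul1r addr0.
case: (pickP (fun l => x l != y l)) => [l xyl|same].
  have -> : (x == y) = false by apply: contraNF xyl => /eqP ->.
  by rewrite (bigD1 l) //= (negbTE xyl) mul0r.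
have -> : x = y by apply/ffunP => l; have /negbFE/eqP := same l.
by rewrite eqxx; apply: big1 => l _; rewrite eqxx.
Qed.

Lemma bridgeE (s t : R) (xs x0 xt : X) : qfwd alpha 0 t xt x0 != 0 ->
  bridge alpha s t xs x0 xt =
  qfwd alpha s t xt xs * qfwd alpha 0 s xs x0 / qfwd alpha 0 t xt x0.
Proof.
rewrite /bridge => q_neq0; case: eqP => // ->.
by rewrite qfwd00; case: eqVneq => [->|]; [rewrite mulr1 divff | rewrite mulr0 mul0r].
Qed.

Lemma sum_qlift (s : R) (x x0 : X) :
  \sum_(u : X) qlift alpha s x x0 u = N * qfwd alpha 0 s x x0.
Proof.
rewrite /qlift -(bigA_distr_bigA (fun l k =>
  alpha s * (x l == x0 l)%:R + (1 - alpha s) * (x l == k)%:R)).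
rewrite card_seqsR /qfwd -big_split /=; apply: eq_bigr => l _.
rewrite big_split /= -!mulr_sumr sum_delta_natr sumr_const card_ord alpha0 divr1 -mulr_natl.
by field; apply: natr_K_neq0.
Qed.

Lemma sum_pcond (s : R) (x : X) :
  \sum_(u : X) pcond alpha p0 s x u = N * pmarg alpha p0 s x.
Proof.
rewrite /pcond exchange_big /pmarg mulr_sumr; apply: eq_bigr => y _.
by rewrite -mulr_sumr sum_qlift mulrCA.
Qed.

Lemma qlift_remask (s : R) (x x0 u : X) : 0 < alpha s ->
  qlift alpha s x x0 u = N * qfwd alpha 0 s x x0 * remask (alpha s) u x x0.
Proof.
move=> a_gt0; rewrite card_seqsR /qfwd /remask /qlift -!big_split /=.
apply: eq_bigr => l _; rewrite alpha0 divr1.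
have K1_ge0 : 0 <= K%:R - 1 :> R by rewrite subr_ge0 ler1n (leq_trans _ hK).
have den_neq0 : 1 + (K%:R - 1) * alpha s != 0.
  by rewrite lt0r_neq0 // ltr_pwDl // mulr_ge0 // ltW.
have K_neq0 := natr_K_neq0.
have [->|_] /= := eqVneq (x l) (x0 l); rewrite ?eqxx eq_sym.
  by case: eqP => _; rewrite /= ?(mulr1, mulr0); field; rewrite K_neq0 den_neq0.
by case: eqP => _; rewrite /= ?(mulr1, mulr0); field.
Qed.

Lemma qlift_ge0 (s : R) (x y u : X) : 0 <= alpha s <= 1 -> 0 <= qlift alpha s x y u.
Proof.
case/andP=> a_ge0 a_le1; apply: prodr_ge0 => l _.
by rewrite addr_ge0 ?mulr_ge0 ?subr_ge0 ?ler0n.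
Qed.

Lemma pcond_mul_denoiser (s : R) (x y u : X) : 0 <= alpha s <= 1 ->
  pcond alpha p0 s x u * denoiser alpha p0 s y x u = p0 y * qlift alpha s x y u.
Proof.
move=> a_bnd; rewrite /denoiser.
have [pc0|pc_neq0] := eqVneq (pcond alpha p0 s x u) 0; last by rewrite mulrCA divff ?mulr1.
rewrite pc0 mul0r; move: pc0; rewrite /pcond => /psumr_eq0P -> // z _.
by rewrite mulr_ge0 ?qlift_ge0.
Qed.

Lemma pmarg_gt0 (s : R) (x : X) : \sum_z p0 z = 1 -> 0 <= alpha s < 1 ->
  0 < pmarg alpha p0 s x.
Proof.
move=> p0_sum a_bnd; have q_gt0 z := qfwd0_gt0 x z a_bnd.
have term_ge0 z : 0 <= p0 z * qfwd alpha 0 s x z := mulr_ge0 (p0_ge0 z) (ltW (q_gt0 z)).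
rewrite /pmarg lt0r (sumr_ge0 _ (fun z _ => term_ge0 z)) andbT.
apply/eqP => /psumr_eq0P pm0.
have p0_eq0 z : p0 z = 0.
  have /eqP := pm0 (fun z _ => term_ge0 z) z isT.
  by rewrite mulf_eq0 (gt_eqF (q_gt0 z)) orbF => /eqP.
by move: p0_sum; rewrite big1 // => /eqP; rewrite eq_sym oner_eq0.
Qed.

Lemma pmarg_mul_prev (s t : R) (xs xt : X) : pmarg alpha p0 t xt != 0 ->
  pmarg alpha p0 t xt * Defs.prev alpha p0 s t xs xt =
  pmarg alpha p0 s xs * qfwd alpha s t xt xs.
Proof. by move=> pm_neq0; rewrite /Defs.prev mulrC mulfVK. Qed.

Lemma remasked_step (s t : R) (xs xt b : X) : 0 < alpha s -> 0 < alpha t < 1 ->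
  \sum_a \sum_z (N^-1 * pcond alpha p0 t xt a) *
     (denoiser alpha p0 t z xt a * bridge alpha s t xs z xt * remask (alpha s) b xs z)
  = qfwd alpha s t xt xs * (N^-1 * pcond alpha p0 s xs b).
Proof.
move=> as_gt0 /andP[at_gt0 at_lt1].
have qt_neq0 z : qfwd alpha 0 t xt z != 0 by rewrite gt_eqF // qfwd0_gt0 // ltW.
have joint a z : pcond alpha p0 t xt a * denoiser alpha p0 t z xt a =
    p0 z * qlift alpha t xt z a by rewrite pcond_mul_denoiser // !ltW.
transitivity (\sum_z \sum_a N^-1 * p0 z * bridge alpha s t xs z xt *
    remask (alpha s) b xs z * qlift alpha t xt z a).
  rewrite exchange_big; apply: eq_bigr => z _; apply: eq_bigr => a _.
  transitivity (N^-1 * (pcond alpha p0 t xt a * denoiser alpha p0 t z xt a) *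
    bridge alpha s t xs z xt * remask (alpha s) b xs z); first ring.
  by rewrite joint; ring.
rewrite /pcond !mulr_sumr; apply: eq_bigr => z _.
rewrite -mulr_sumr sum_qlift bridgeE // qlift_remask //.
by field; rewrite card_seqsR_neq0 qt_neq0.
Qed.

End UDM.

Theorem mainTheorem7 (R : realFieldType) (K L : nat) (hK : (2 <= K)%N) (hL : (1 <= L)%N)
  (alpha : R -> R)
  (alpha_decr : forall s t : R, 0 <= s -> s < t -> t <= 1 -> alpha t < alpha s)
  (alpha0 : alpha 0 = 1)
  (alpha_in : forall t : R, 0 < t -> t <= 1 -> 0 < alpha t /\ alpha t < 1)
  (p0 : seqs K L -> R) (p0_ge0 : forall x, 0 <= p0 x) (p0_sum : \sum_(x : seqs K L) p0 x = 1)
  (n : nat) (t : nat -> R) (t0 : t 0%N = 0) (tn : t n = 1)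
  (t_incr : forall i : nat, (i < n)%N -> t i < t i.+1)
  (x : {ffun 'I_n.+1 -> seqs K L}) :
  sampler_law alpha p0 t x = reverse_law alpha p0 t x.
Proof.
have alpha_step := grid_alpha_in alpha_in t0 tn t_incr.
have alpha_gt0 i : (i <= n)%N -> 0 < alpha (t i).
  by case: i => [|i] hi; [rewrite t0 alpha0 | case/andP: (alpha_step i hi)].
pose xs i := x (inord i).
have x_last : x ord_max = xs n by rewrite /xs (inord_val ord_max).
pose q i := qfwd alpha (t i) (t i.+1) (xs i.+1) (xs i).
pose N := (#|{: seqs K L}|%:R : R).
transitivity (\prod_(i < n) q i * \sum_b N^-1 * pcond alpha p0 (t 0%N) (xs 0%N) b).
  rewrite /sampler_law x_last.
  pose H i a y b := denoiser alpha p0 (t i.+1) y (xs i.+1) a *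
    bridge alpha (t i) (t i.+1) (xs i) y (xs i.+1) * remask (alpha (t i)) b (xs i) y.
  apply: (chain_sum_elim (H := H) (f := fun k b => N^-1 * pcond alpha p0 (t k) (xs k) b)).
  move=> k b hk.
  exact: remasked_step (alpha_gt0 k (ltnW hk)) (alpha_step k hk).
rewrite -mulr_sumr sum_pcond // mulKf ?card_seqsR_neq0 //.
rewrite /reverse_law x_last [LHS]mulrC; symmetry.
apply: (prod_telescope (p := fun i => pmarg alpha p0 (t i) (xs i))
  (r := fun i => Defs.prev alpha p0 (t i) (t i.+1) (xs i) (xs i.+1))) => i hi.
apply: pmarg_mul_prev; rewrite gt_eqF // pmarg_gt0 //.
by case/andP: (alpha_step i hi) => /ltW -> ->.
Qed.
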